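(* Let $q$ be odd, $n\ge2$, $G=\mathbf{SL}_n(q)$, and let $u\in G$ be unipotent of type $(\lambda_1,\dots,\lambda_k)$ with $\lambda_1>2$. Then the conjugacy class $\mathcal{O}_u$ of $u$ in $G$ is of type D.
   Context: Unipotent type $(\lambda_1\ge\dots\ge\lambda_k)$ = sizes of Jordan blocks. Conjugacy classes are racks with $x\triangleright y=xyx^{-1}$. A subrack $Y$ is decomposable if $Y=R\sqcup S$ with nonempty subracks $R,S$, $Y\triangleright R=R$, $Y\triangleright S=S$. Type D: a decomposable subrack $R\sqcup S$ with $r\in R,s\in S$ and $r\triangleright(s\triangleright(r\triangleright s))\neq s$. *)

From HB Require Import structures.
From mathcomp Require Import all_boot all_algebra.
Set Implicit Arguments. Unset Strict Implicit. Unset Printing Implicit Defensive.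
Import GRing.Theory.
Local Open Scope ring_scope.

Section Defs.
Variables (F : finFieldType) (n : nat).
Implicit Types (x y u g : 'M[F]_n) (X Y R S : {set 'M[F]_n}).

Definition SLn : {set 'M[F]_n} := [set A : 'M[F]_n | \det A == 1].

Definition unipotent u : bool := (u - 1%:M) ^+ n == 0.

(* lambda_1 = size of the largest Jordan block of u = nilpotency index of
   u - 1 (least k with (u - 1)^k = 0); for unipotent u this is <= n. *)
Definition lambda1 u : nat :=
  find (fun k => (u - 1%:M) ^+ k == 0) (iota 0 n.+1).

Definition conj_class u : {set 'M[F]_n} :=
  [set g *m u *m invmx g | g in SLn].

Definition rop x y : 'M[F]_n := x *m y *m invmx x.

Definition ract Y R : {set 'M[F]_n} := [set rop y r | y in Y, r in R].

Definition subrack X Y : Prop :=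
  Y \subset X /\ {in Y &, forall y z, rop y z \in Y}.

Definition decomposition X Y R S : Prop :=
  subrack X Y /\ subrack X R /\ subrack X S /\
  R != set0 /\ S != set0 /\
  R :|: S = Y /\ [disjoint R & S] /\
  ract Y R = R /\ ract Y S = S.

Definition type_D X : Prop :=
  exists Y R S, decomposition X Y R S /\
    exists2 r, r \in R & exists2 s, s \in S &
      rop r (rop s (rop r s)) != s.

End Defs.

(* Matrices act on row vectors; put N = u - 1.  The flag V >= im N >= im N^2
   determines the group K of invertible matrices acting trivially on V/im N
   and on im N / im N^2.  For x, z in K the commutator of z and x moves V into
   im N^2, so conjugation by K preserves congruence classes modulo im N^2.
   Hence if s is a second point of the class O_u lying in K, the points of
   O_u in K congruent to u, resp. to s, modulo im N^2 form disjoint subracks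
   R, S with R u S decomposable; this is the criterion flag_typeD.

   To produce s, pick b with b N^2 outside im N^3 (possible as lambda_1 > 2)
   and build from two linear forms an involution t of determinant 1 that
   preserves the flag, fixes b and im N^3, and negates b N and b N^2.  Then
   s = t u t lies in O_u and in K, b (s - u) = -2 b N shows that s and u are
   not congruent, and on the chain b, b N, ..., b N^4 the braid relation
   u s u s = s u s u fails by 4 b N^2, which is nonzero since q is odd. *)

From HB Require Import structures.
From mathcomp Require Import all_boot all_algebra ring.
From mathcomp Require cyclic.
Set Implicit Arguments. Unset Strict Implicit. Unset Printing Implicit Defensive.
Import GRing.Theory.
Local Open Scope ring_scope.

Section MatrixFacts.
Variables (F : fieldType) (n : nat).
Implicit Types (A B N u x z : 'M[F]_n).

Lemma invmxM A B : A \in unitmx -> B \in unitmx ->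
  invmx (A *m B) = invmx B *m invmx A.
Proof.
move=> uA uB; have uAB : A *m B \in unitmx by rewrite unitmx_mul uA uB.
have AB_inv : (A *m B) *m (invmx B *m invmx A) = 1%:M.
  by rewrite mulmxA -(mulmxA A) mulmxV // mulmx1 mulmxV.
by rewrite -[RHS](mulKmx uAB) AB_inv mulmx1.
Qed.

(* Matrix determinant lemma, via the two block factorisations of
   [[1, -d], [c, 1]]. *)
Lemma det_rank1 (c : 'cV[F]_n) (d : 'rV[F]_n) :
  \det (1%:M + c *m d) = 1 + (d *m c) 0 0.
Proof.
have e1 : block_mx (1%:M : 'M_1) 0 c 1%:M *m block_mx 1%:M (- d) 0 (1%:M + c *m d)
        = block_mx 1%:M (- d) c 1%:M.
  rewrite mulmx_block !mulmx0 !mul0mx !mulmx1 !mul1mx ?addr0 ?add0r.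
  by rewrite mulmxN addrCA addNr addr0.
have e2 : block_mx (1%:M + d *m c) (- d) 0 (1%:M : 'M_n) *m block_mx 1%:M 0 c 1%:M
        = block_mx 1%:M (- d) c 1%:M.
  rewrite mulmx_block !mulmx0 !mul0mx !mulmx1 !mul1mx ?addr0 ?add0r.
  by rewrite mulNmx addrK.
have := congr1 determinant (etrans e1 (esym e2)).
rewrite !det_mulmx !det_lblock !det_ublock !det1 !mul1r !mulr1.
by move=> ->; rewrite det_mx11 !mxE.
Qed.

Lemma commutator_sub1 z x :
  z *m x - x *m z = (z - 1%:M) *m (x - 1%:M) - (x - 1%:M) *m (z - 1%:M).
Proof.
rewrite !mulmxBl !mulmxBr !mulmx1 !mul1mx.
move: (z *m x) (x *m z) => P Q; apply/matrixP => i j; rewrite !mxE; ring.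
Qed.

Lemma comm_invmx N u : u \in unitmx -> N *m u = u *m N ->
  N *m invmx u = invmx u *m N.
Proof.
by move=> uu NuC; rewrite -{1}(mulKmx uu N) -NuC !mulmxA mulmxK.
Qed.

Lemma conj_sub1 z x : z \in unitmx ->
  z *m x *m invmx z - 1%:M = z *m (x - 1%:M) *m invmx z.
Proof. by move=> uz; rewrite mulmxBr mulmxBl mulmx1 mulmxV. Qed.

End MatrixFacts.

Section RowSpaceFacts.
Variable F : fieldType.

Lemma submxMr_trans m1 m2 m3 n p (X : 'M[F]_(m1, n)) (Y : 'M[F]_(m2, n))
   (Z : 'M[F]_(m3, p)) (M : 'M[F]_(n, p)) :
  (X <= Y)%MS -> (Y *m M <= Z)%MS -> (X *m M <= Z)%MS.
Proof. by move=> XY; apply: submx_trans (submxMr M XY). Qed.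

Lemma oppmx_sub m1 m2 n (X : 'M[F]_(m1, n)) (Z : 'M[F]_(m2, n)) :
  (X <= Z)%MS -> (- X <= Z)%MS.
Proof. by move=> XZ; rewrite -scaleN1r scalemx_sub. Qed.

Lemma subBmx_sub m1 m2 n (X Y : 'M[F]_(m1, n)) (Z : 'M[F]_(m2, n)) :
  (X <= Z)%MS -> (Y <= Z)%MS -> (X - Y <= Z)%MS.
Proof. by move=> XZ YZ; rewrite addmx_sub ?oppmx_sub. Qed.

End RowSpaceFacts.

(* Linear forms on row vectors, represented by column vectors; ev c x is the
   value of the form c at x.  It is linear in both arguments, and a rank-one
   matrix c d acts by x |-> ev c x d. *)
Section LinearForms.
Variables (F : fieldType) (n : nat).
Implicit Types (c : 'cV[F]_n) (x y d : 'rV[F]_n).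

Definition ev c x : F := (x *m c) 0 0.

Lemma evB c x y : ev c (x - y) = ev c x - ev c y.
Proof. by rewrite /ev mulmxDl mulNmx !mxE. Qed.

Lemma evZ c a x : ev c (a *: x) = a * ev c x.
Proof. by rewrite /ev -scalemxAl !mxE. Qed.

Lemma ev_formB c c' x : ev (c - c') x = ev c x - ev c' x.
Proof. by rewrite /ev mulmxDr mulmxN !mxE. Qed.

Lemma ev_formZ c a x : ev (a *: c) x = a * ev c x.
Proof. by rewrite /ev -scalemxAr !mxE. Qed.

Lemma ev_formM c (M : 'M[F]_n) x : ev (M *m c) x = ev c (x *m M).
Proof. by rewrite /ev mulmxA. Qed.

Lemma mul_rank1 c d x : x *m (c *m d) = ev c x *: d.
Proof. by rewrite mulmxA {1}[x *m c]mx11_scalar mul_scalar_mx. Qed.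

Lemma ev_sub0 m (M : 'M[F]_(m, n)) c x : M *m c = 0 -> (x <= M)%MS -> ev c x = 0.
Proof. by move=> Mc0 /submxP[y ->]; rewrite /ev -mulmxA Mc0 mulmx0 mxE. Qed.

Lemma separating_form m (M : 'M[F]_(m, n)) x :
  ~~ (x <= M)%MS -> exists2 c, M *m c = 0 & ev c x = 1.
Proof.
rewrite submxE; move: (mulmx_coker M); set K := cokermx M => MK0 xK; clearbody K.
have [j xKj] : exists j, (x *m K) 0 j != 0.
  apply/existsP; apply: contraR xK => /existsPn xK0.
  by apply/eqP/rowP => j; move/negbNE/eqP: (xK0 j) => ->; rewrite mxE.
exists (((x *m K) 0 j)^-1 *: col j K).
  by rewrite -scalemxAr colE mulmxA MK0 mul0mx scaler0.
by rewrite ev_formZ /ev colE mulmxA -colE [col _ _ _ _]mxE mulVf.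
Qed.

End LinearForms.

(* The reflection x |-> x - 2 ev c x d, an involution of determinant -1
   when ev c d = 1; the product of two orthogonal such reflections is an
   involution of determinant 1. *)
Section Reflections.
Variables (F : fieldType) (n : nat).
Implicit Types (c : 'cV[F]_n) (x d : 'rV[F]_n).

Definition refl c d : 'M[F]_n := 1%:M + ((-2) *: c) *m d.

Lemma reflE c d x : x *m refl c d = x - (2 * ev c x) *: d.
Proof.
rewrite mulmxDr mulmx1 mul_rank1 ev_formZ.
by apply/rowP => k; rewrite !mxE; ring.
Qed.

Lemma det_refl c d : ev c d = 1 -> \det (refl c d) = -1.
Proof. by move=> cd1; rewrite det_rank1 -/(ev _ d) ev_formZ cd1; ring. Qed.

Variables (c1 c2 : 'cV[F]_n) (d1 d2 : 'rV[F]_n).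
Hypotheses (c1d1 : ev c1 d1 = 1) (c1d2 : ev c1 d2 = 0).
Hypotheses (c2d1 : ev c2 d1 = 0) (c2d2 : ev c2 d2 = 1).

Definition refl2 : 'M[F]_n := refl c1 d1 *m refl c2 d2.

Lemma refl2E x : x *m refl2 = x - (2 * ev c1 x) *: d1 - (2 * ev c2 x) *: d2.
Proof.
rewrite mulmxA !reflE evB evZ c2d1.
by apply/rowP => k; rewrite !mxE; ring.
Qed.

Lemma det_refl2 : \det refl2 = 1.
Proof. by rewrite det_mulmx !det_refl //; ring. Qed.

Lemma refl2_invol : refl2 *m refl2 = 1%:M.
Proof.
apply/row_matrixP => i; rewrite row_mul -{1}[refl2]mul1mx row_mul.
rewrite !refl2E !evB !evZ c1d1 c1d2 c2d1 c2d2.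
by apply/rowP => k; rewrite !mxE; ring.
Qed.

End Reflections.

Section SpecialLinear.
Variables (F : finFieldType) (n : nat).
Implicit Types (u x y z : 'M[F]_n).

Lemma SL_unit x : x \in SLn F n -> x \in unitmx.
Proof. by rewrite inE unitmxE => /eqP ->; rewrite unitr1. Qed.

Lemma SL_inv x : x \in SLn F n -> invmx x \in SLn F n.
Proof. by rewrite !inE det_inv => /eqP ->; rewrite invr1. Qed.

Lemma SL_mul x y : x \in SLn F n -> y \in SLn F n -> x *m y \in SLn F n.
Proof. by rewrite !inE det_mulmx => /eqP -> /eqP ->; rewrite mulr1. Qed.

Lemma conj_class_refl u : u \in conj_class u.
Proof.
apply/imsetP; exists 1%:M; first by rewrite inE det1.
by rewrite mul1mx invmx1 mulmx1.
Qed.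

Lemma conj_class_SL u x : u \in SLn F n -> x \in conj_class u -> x \in SLn F n.
Proof. by move=> uSL /imsetP[g gSL ->]; rewrite !SL_mul ?SL_inv. Qed.

Lemma conj_class_conj u z x :
  z \in SLn F n -> x \in conj_class u -> rop z x \in conj_class u.
Proof.
move=> zSL /imsetP[g gSL ->]; apply/imsetP; exists (z *m g); first exact: SL_mul.
by rewrite /rop invmxM ?SL_unit // !mulmxA.
Qed.

End SpecialLinear.

(* The flag V >= A >= B (row spaces, B <= A).  A matrix x is
   "flag-trivial" when it acts trivially on V/A and on A/B and stabilises B;
   for two such elements the commutator moves V into B, so conjugation by
   flag-trivial elements preserves the class of x modulo B. *)
Section Flag.
Variables (F : fieldType) (n : nat) (A B : 'M[F]_n).
Implicit Types (x y z : 'M[F]_n).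

Definition flag_trivial x : bool :=
  [&& (x - 1%:M <= A)%MS, (A *m (x - 1%:M) <= B)%MS & (B *m x <= B)%MS].

Definition flag_preserving z : bool := (A *m z <= A)%MS && (B *m z <= B)%MS.

Definition congr_mod x y : bool := (x - y <= B)%MS.

Lemma congr_mod_refl x : congr_mod x x.
Proof. by rewrite /congr_mod subrr sub0mx. Qed.

Lemma congr_mod_sym x y : congr_mod x y -> congr_mod y x.
Proof. by rewrite /congr_mod => xy; rewrite -opprB oppmx_sub. Qed.

Lemma congr_mod_trans x y z : congr_mod x y -> congr_mod y z -> congr_mod x z.
Proof.
rewrite /congr_mod => xy yz.
by rewrite -[x](subrK y) -addrA addmx_sub.
Qed.

Hypothesis BA : (B <= A)%MS.

Lemma flag_trivial_preserving x : flag_trivial x -> flag_preserving x.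
Proof.
case/and3P=> x1A Ax1B Bx; rewrite /flag_preserving Bx andbT.
have -> : A *m x = A *m (x - 1%:M) + A by rewrite mulmxBr mulmx1 subrK.
by rewrite addmx_sub // (submx_trans Ax1B BA).
Qed.

Lemma flag_trivial_conj z x : z \in unitmx ->
  flag_preserving z -> flag_preserving (invmx z) -> flag_trivial x ->
  flag_trivial (z *m x *m invmx z).
Proof.
move=> uz /andP[Az Bz] /andP[Azi Bzi] /and3P[x1A Ax1B Bx].
rewrite /flag_trivial conj_sub1 //; apply/and3P; split.
- by rewrite -mulmxA mulmx_sub // (submxMr_trans x1A).
- by rewrite !mulmxA (submxMr_trans _ Bzi) // (submxMr_trans Az).
- by rewrite !mulmxA (submxMr_trans _ Bzi) // (submxMr_trans Bz).
Qed.

Lemma flag_commutator z x : z \in unitmx ->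
  flag_trivial z -> flag_preserving (invmx z) -> flag_trivial x ->
  congr_mod (z *m x *m invmx z) x.
Proof.
move=> uz /and3P[z1A Az1B _] /andP[_ Bzi] /and3P[x1A Ax1B _]; rewrite /congr_mod.
have -> : z *m x *m invmx z - x = (z *m x - x *m z) *m invmx z.
  by rewrite mulmxBl -(mulmxA x) mulmxV // mulmx1.
rewrite (submxMr_trans _ Bzi) // commutator_sub1.
by rewrite subBmx_sub // (submxMr_trans z1A, submxMr_trans x1A).
Qed.

End Flag.

Section FlagGroup.
Variables (F : finFieldType) (n : nat) (A B : 'M[F]_n).
Implicit Types (u w x z : 'M[F]_n).

Definition flag_group : {set 'M[F]_n} :=
  [set x | [&& x \in unitmx, flag_trivial A B x & flag_trivial A B (invmx x)]].

Lemma flag_group_inv x : x \in flag_group -> invmx x \in flag_group.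
Proof. by rewrite !inE unitmx_inv invmxK => /and3P[-> -> ->]. Qed.

Lemma flag_group_conj z x : z \in unitmx ->
  flag_preserving A B z -> flag_preserving A B (invmx z) ->
  x \in flag_group -> rop z x \in flag_group.
Proof.
move=> uz pz pzi; rewrite !inE => /and3P[ux tx txi].
have uzx : z *m x \in unitmx by rewrite unitmx_mul uz ux.
rewrite /rop unitmx_mul uzx unitmx_inv uz flag_trivial_conj //=.
by rewrite !invmxM ?unitmx_inv // invmxK mulmxA flag_trivial_conj.
Qed.

Definition flag_class u w : {set 'M[F]_n} :=
  [set x in conj_class u | (x \in flag_group) && congr_mod B x w].

Lemma flag_classE u w x : x \in flag_class u w =
  [&& x \in conj_class u, x \in flag_group & congr_mod B x w].
Proof. by rewrite inE. Qed.

Hypothesis BA : (B <= A)%MS.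

Lemma flag_class_conj u w z x : z \in SLn F n -> z \in flag_group ->
  x \in flag_class u w -> rop z x \in flag_class u w.
Proof.
move=> zSL zK; rewrite !flag_classE => /and3P[xO xK xw].
move: (zK); rewrite inE => /and3P[uz tz tzi].
have [pz pzi] := (flag_trivial_preserving BA tz, flag_trivial_preserving BA tzi).
rewrite conj_class_conj //= flag_group_conj //=.
apply: congr_mod_trans xw; apply: (flag_commutator (A := A)) => //.
by move: xK; rewrite inE => /and3P[].
Qed.

End FlagGroup.

Section Racks.
Variables (F : finFieldType) (n : nat).
Implicit Types (Y T R S : {set 'M[F]_n}) (u x y : 'M[F]_n).

Definition conj_stable Y T : Prop :=
  {in Y & T, forall y x, rop y x \in T /\ rop (invmx y) x \in T}.

Lemma rop_invK y x : y \in unitmx -> rop y (rop (invmx y) x) = x.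
Proof.
by move=> uy; rewrite /rop invmxK !mulmxA mulmxV // mul1mx mulmxK.
Qed.

(* A conjugation-stable T satisfies Y |> T = T, as x = y |> (y^-1 |> x). *)
Lemma ract_stable Y T : {subset Y <= unitmx} -> Y != set0 ->
  conj_stable Y T -> ract Y T = T.
Proof.
move=> Yunit /set0Pn[y yY] stT; apply/setP => x; apply/imset2P/idP.
  by case=> y' x' y'Y x'T ->; have [] := stT y' x' y'Y x'T.
move=> xT; exists y (rop (invmx y) x) => //; first by have [] := stT y x yY xT.
by rewrite rop_invK ?Yunit.
Qed.

Lemma stable_decomposition u R S : u \in SLn F n ->
  R \subset conj_class u -> S \subset conj_class u ->
  R != set0 -> S != set0 -> [disjoint R & S] ->
  conj_stable (R :|: S) R -> conj_stable (R :|: S) S ->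
  decomposition (conj_class u) (R :|: S) R S.
Proof.
move=> uSL RO SO R0 S0 RS stR stS.
have YO : R :|: S \subset conj_class u by rewrite subUset RO SO.
have Yunit : {subset R :|: S <= unitmx}.
  by move=> y /(subsetP YO) /(conj_class_SL uSL) /SL_unit.
have Y0 : R :|: S != set0.
  by case/set0Pn: R0 => x xR; apply/set0Pn; exists x; rewrite inE xR.
have subrackT T : T \subset R :|: S -> conj_stable (R :|: S) T ->
    subrack (conj_class u) T.
  move=> TY stT; split; first exact: subset_trans YO.
  by move=> y x yT xT; have [] := stT y x (subsetP TY y yT) xT.
have YY : subrack (conj_class u) (R :|: S).
  split=> // y x yY; rewrite !inE => /orP[xR | xS].
  - by have [-> _] := stR y x yY xR.
  - by have [-> _] := stS y x yY xS; rewrite orbT.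
split; first exact: YY.
split; first exact: subrackT (subsetUl R S) stR.
split; first exact: subrackT (subsetUr R S) stS.
by do 4 split=> //; split; apply: ract_stable.
Qed.

Lemma rop_braid x y : x \in unitmx -> y \in unitmx ->
  (rop x (rop y (rop x y)) == y) = (x *m y *m x *m y == y *m x *m y *m x).
Proof.
move=> ux uy; rewrite /rop !mulmxA; apply/eqP/eqP => E.
  by have := congr1 (fun M => M *m x *m y *m x) E; rewrite /= !mulmxKV.
by rewrite E !mulmxK.
Qed.

End Racks.

Lemma flag_typeD (F : finFieldType) n (A B u s : 'M[F]_n) :
  (B <= A)%MS -> u \in SLn F n -> u \in flag_group A B ->
  s \in conj_class u -> s \in flag_group A B -> ~~ congr_mod B s u ->
  rop u (rop s (rop u s)) != s -> type_D (conj_class u).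
Proof.
move=> BA uSL uK sO sK su braid.
set R := flag_class A B u u; set S := flag_class A B u s.
have uR : u \in R by rewrite flag_classE conj_class_refl uK congr_mod_refl.
have sS : s \in S by rewrite flag_classE sO sK congr_mod_refl.
have classO w : flag_class A B u w \subset conj_class u.
  by apply/subsetP => x; rewrite flag_classE => /andP[].
have stable w : conj_stable (R :|: S) (flag_class A B u w).
  move=> y x yY xw; have [yO yK] : y \in conj_class u /\ y \in flag_group A B.
    by case/setUP: yY; rewrite flag_classE => /and3P[].
  have ySL := conj_class_SL uSL yO.
  by split; apply: flag_class_conj; rewrite ?SL_inv ?flag_group_inv.
exists (R :|: S), R, S; split; last by exists u => //; exists s.
apply: stable_decomposition => //; try exact: classO; try exact: stable.
- by apply/set0Pn; exists u.
- by apply/set0Pn; exists s.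
rewrite -setI_eq0; apply/eqP/setP => x; rewrite in_setI !flag_classE in_set0.
apply/negP => /andP[/and3P[_ _ xu] /and3P[_ _ xs]].
by move/negP: su; apply; apply: congr_mod_trans (congr_mod_sym xs) xu.
Qed.

(* Given b with b N^2 outside the row space of N^3, two linear forms: the
   first kills the rows of N^2, the second those of N^3, and on the vectors
   b, b N they take the values 0, 1 and 0, 0 respectively, with the second
   form equal to 1 on b N^2.  Starting from a form f killing N^3 with
   f(b N^2) = 1, they are c1 = f(_ N) - f(b N) f(_ N^2) and
   c2 = f - f(b N) c1 - f(b) f(_ N^2). *)
Lemma twist_forms (F : fieldType) n (N : 'M[F]_n) (b : 'rV[F]_n) :
  ~~ (b *m N *m N <= N *m N *m N)%MS ->
  exists c1 c2 : 'cV[F]_n,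
    [/\ forall x, ev c1 (x *m N *m N) = 0, ev c1 b = 0, ev c1 (b *m N) = 1,
        forall x, ev c2 (x *m N *m N *m N) = 0
      & [/\ ev c2 b = 0, ev c2 (b *m N) = 0 & ev c2 (b *m N *m N) = 1]].
Proof.
move=> bN2; have [f N3f fd2] := separating_form bN2.
have fN3 x : ev f (x *m N *m N *m N) = 0.
  by apply: ev_sub0 N3f _; rewrite -!mulmxA submxMl.
pose a1 := ev f (b *m N); pose a0 := ev f b.
pose c1 := N *m f - a1 *: (N *m N *m f).
have c1E x : ev c1 x = ev f (x *m N) - a1 * ev f (x *m N *m N).
  by rewrite ev_formB ev_formZ !ev_formM mulmxA.
have c1N2 x : ev c1 (x *m N *m N) = 0 by rewrite c1E fN3 (fN3 (x *m N)) mulr0 subr0.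
have c1b : ev c1 b = 0 by rewrite c1E fd2 mulr1 subrr.
have c1bN : ev c1 (b *m N) = 1 by rewrite c1E fd2 fN3 mulr0 subr0.
clearbody c1; pose c2 := f - a1 *: c1 - a0 *: (N *m N *m f).
have c2E x : ev c2 x = ev f x - a1 * ev c1 x - a0 * ev f (x *m N *m N).
  by rewrite !ev_formB !ev_formZ ev_formM mulmxA.
exists c1, c2; split => //.
- by move=> x; rewrite c2E c1N2 fN3 (fN3 (x *m N *m N)) !mulr0 !subr0.
split.
- by rewrite c2E c1b fd2 mulr0 subr0 mulr1 subrr.
- by rewrite c2E c1bN fN3 mulr1 mulr0 subr0 subrr.
- by rewrite c2E c1N2 fN3 fd2 !mulr0 !subr0.
Qed.

Lemma twist_involution (F : fieldType) n (N : 'M[F]_n) (b : 'rV[F]_n) :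
  ~~ (b *m N *m N <= N *m N *m N)%MS ->
  exists t : 'M[F]_n,
    [/\ \det t = 1, t *m t = 1%:M, flag_preserving N (N *m N) t, b *m t = b
      & [/\ b *m N *m t = - (b *m N), b *m N *m N *m t = - (b *m N *m N)
          & forall x : 'rV_n, (x <= N *m N *m N)%MS -> x *m t = x]].
Proof.
move=> bN2; have [c1 [c2 [c1N2 c1b c1d1 c2N3 [c2b c2d1 c2d2]]]] := twist_forms bN2.
have c1_N2 (x : 'rV_n) : (x <= N *m N)%MS -> ev c1 x = 0.
  by case/submxP=> y ->; rewrite mulmxA c1N2.
have c2_N3 (x : 'rV_n) : (x <= N *m N *m N)%MS -> ev c2 x = 0.
  by case/submxP=> y ->; rewrite !mulmxA c2N3.
have c1d2 := c1N2 b.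
have d1N : (b *m N <= N)%MS by apply: submxMl.
have d2N2 : (b *m N *m N <= N *m N)%MS by rewrite -mulmxA submxMl.
have tE := refl2E c1 (b *m N *m N) c2d1.
exists (refl2 c1 c2 (b *m N) (b *m N *m N)); split.
- exact: det_refl2.
- exact: refl2_invol.
- apply/andP; split; apply/row_subP => i; rewrite row_mul tE.
    by rewrite !subBmx_sub ?scalemx_sub ?row_sub // (submx_trans d2N2) ?submxMl.
  by rewrite c1_N2 ?row_sub // mulr0 scale0r subr0 subBmx_sub ?scalemx_sub ?row_sub.
- by rewrite tE c1b c2b !mulr0 !scale0r !subr0.
split.
- rewrite tE c1d1 c2d1 mulr0 scale0r subr0 mulr1.
  by apply/rowP => k; rewrite !mxE; ring.
- rewrite tE c1d2 c2d2 mulr0 scale0r subr0 mulr1.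
  by apply/rowP => k; rewrite !mxE; ring.
- have N3N2 : (N *m N *m N <= N *m N)%MS by rewrite -mulmxA submxMl.
  move=> x xN3; rewrite tE c2_N3 // c1_N2 ?(submx_trans xN3) //.
  by rewrite !mulr0 !scale0r !subr0.
Qed.

Lemma braid_defect (F : fieldType) n (u s : 'M[F]_n) (d0 d1 d2 d3 d4 : 'rV[F]_n) :
  d0 *m u = d0 + d1 -> d1 *m u = d1 + d2 -> d2 *m u = d2 + d3 ->
  d3 *m u = d3 + d4 ->
  d0 *m s = d0 - d1 -> d1 *m s = d1 + d2 -> d2 *m s = d2 - d3 ->
  d3 *m s = d3 + d4 ->
  d0 *m (u *m s *m u *m s) - d0 *m (s *m u *m s *m u) = 4%:R *: d2.
Proof.
move=> d0u d1u d2u d3u d0s d1s d2s d3s; rewrite !mulmxA.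
rewrite !(mulmxDl, mulmxBl, mulNmx, d0u, d1u, d2u, d3u, d0s, d1s, d2s, d3s).
by apply/rowP => k; rewrite !mxE; ring.
Qed.

Section TwistedConjugate.
Variables (F : fieldType) (n : nat) (u t : 'M[F]_n) (b : 'rV[F]_n).
Local Notation N := (u - 1%:M).
Local Notation d1 := (b *m N).
Local Notation d2 := (d1 *m N).
Local Notation d3 := (d2 *m N).
Local Notation d4 := (d3 *m N).

Lemma unip_step (x : 'rV[F]_n) : x *m u = x + x *m N.
Proof. by rewrite mulmxBr mulmx1 addrC subrK. Qed.

Hypotheses (bt : b *m t = b) (d1t : d1 *m t = - d1) (d2t : d2 *m t = - d2).
Hypothesis N3t : forall x : 'rV_n, (x <= N *m N *m N)%MS -> x *m t = x.

Lemma twisted_steps :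
  [/\ b *m (t *m u *m t) = b - d1, d1 *m (t *m u *m t) = d1 + d2,
      d2 *m (t *m u *m t) = d2 - d3 & d3 *m (t *m u *m t) = d3 + d4].
Proof.
have N3 (y : 'rV_n) : (y *m N *m N *m N <= N *m N *m N)%MS.
  by rewrite -!mulmxA submxMl.
have [d3t d4t] := (N3t (N3 b), N3t (N3 d1)).
by rewrite !mulmxA !unip_step !(mulmxDl, mulNmx, bt, d1t, d2t, d3t, d4t) !opprK.
Qed.

Hypothesis two_nz : (2%:R : F) != 0.
Hypothesis bN2 : ~~ (d2 <= N *m N *m N)%MS.

(* b (s - u) = -2 b N, and b N is not in im N^2, so s is not congruent to u
   modulo im N^2. *)
Lemma twisted_not_congr : ~~ (b *m (t *m u *m t - u) <= N *m N)%MS.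
Proof.
have [bs _ _ _] := twisted_steps.
have e : b *m (t *m u *m t - u) = (-2) *: d1.
  by rewrite mulmxBr bs unip_step; apply/rowP => k; rewrite !mxE; ring.
have m2 : (-2 : F) != 0 by rewrite oppr_eq0.
apply: contra bN2 => s_u; apply: submxMr.
by rewrite -(scalerK m2 d1) -e scalemx_sub.
Qed.

(* On b, the two sides of the braid relation for u and s differ by 4 b N^2. *)
Lemma twisted_braid_fails :
  u *m (t *m u *m t) *m u *m (t *m u *m t) != (t *m u *m t) *m u *m (t *m u *m t) *m u.
Proof.
have [bs d1s d2s d3s] := twisted_steps; apply/eqP => braid.
have := braid_defect (unip_step b) (unip_step d1) (unip_step d2) (unip_step d3)
  bs d1s d2s d3s.
rewrite braid subrr => /esym/eqP; rewrite scaler_eq0 => /orP[four0 | /eqP d2_0].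
  by move: four0; rewrite -[4%N]/(2 * 2)%N natrM mulf_eq0 orbb (negbTE two_nz).
by move: bN2; rewrite d2_0 sub0mx.
Qed.

End TwistedConjugate.

Lemma comm_stable2 (F : fieldType) n (N x : 'M[F]_n) :
  N *m x = x *m N -> (N *m N *m x <= N *m N)%MS.
Proof. by move=> NxC; rewrite -mulmxA NxC mulmxA NxC -mulmxA submxMl. Qed.

Lemma unipotent_flag (F : finFieldType) n (u : 'M[F]_n) : u \in unitmx ->
  u \in flag_group (u - 1%:M) ((u - 1%:M) *m (u - 1%:M)).
Proof.
move=> uu; set N := u - 1%:M.
have NuC : N *m u = u *m N by rewrite mulmxBl mulmxBr mulmx1 mul1mx.
have NiC := comm_invmx uu NuC.
have ui1 : invmx u - 1%:M = - (invmx u *m N) by rewrite mulmxBr mulmx1 mulVmx // opprB.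
rewrite inE uu /flag_trivial ui1 -/N !submx_refl mulmxN !oppmx_sub ?submxMl //=.
  by rewrite !comm_stable2.
by rewrite mulmxA NiC -mulmxA submxMl.
Qed.

Lemma twisted_typeD (F : finFieldType) n (u : 'M[F]_n) (b : 'rV[F]_n) :
  (2%:R : F) != 0 -> u \in SLn F n ->
  ~~ (b *m (u - 1%:M) *m (u - 1%:M) <=
      (u - 1%:M) *m (u - 1%:M) *m (u - 1%:M))%MS ->
  type_D (conj_class u).
Proof.
move=> two_nz uSL bN2; have uu := SL_unit uSL.
have [t [tdet tt tpres bt [d1t d2t N3t]]] := twist_involution bN2.
have [tu _] := mulmx1_unit tt.
have tinv : invmx t = t by rewrite -[invmx t]mulmx1 -tt mulmxA mulVmx // mul1mx.
have tSL : t \in SLn F n by rewrite inE tdet.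
have sE : rop t u = t *m u *m t by rewrite /rop tinv.
have su : rop t u \in unitmx by rewrite sE !unitmx_mul tu uu.
apply: (flag_typeD (A := u - 1%:M) (s := rop t u) (submxMl _ _) uSL).
- exact: unipotent_flag.
- exact: conj_class_conj (conj_class_refl u).
- by apply: flag_group_conj; rewrite ?tinv // unipotent_flag.
- apply: contra (twisted_not_congr bt d1t d2t N3t two_nz bN2).
  by rewrite -sE => /(mulmx_sub b).
- by rewrite rop_braid // sE (twisted_braid_fails bt d1t d2t N3t two_nz bN2).
Qed.

(* In a finite ring, |R| * 1 = 0 (the additive order of 1 divides |R|). *)
Lemma natr_card (R : finNzRingType) : (#|R|%:R : R) = 0.
Proof.
have := @cyclic.expg_cardG _ (fingroup.setT_group (fingroup.FinGroup.clone R _))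
  1%R (in_setT _).
by rewrite cardsT FinRing.zmodXgE.
Qed.

Lemma two_neq0 (R : finNzRingType) : odd #|R| -> (2%:R : R) != 0.
Proof.
move=> oddR; apply/eqP => two0; have := natr_card R.
rewrite -[#|R|]odd_double_half oddR -mul2n natrD natrM two0 mul0r addr0.
by move/eqP; rewrite oner_eq0.
Qed.

Lemma nilpotent_gap (F : fieldType) n (N : 'M[F]_n) k :
  N ^+ k = 0 -> N *m N != 0 -> ~~ (N *m N <= N *m N *m N)%MS.
Proof.
move=> Nk0; apply: contra => N2N3.
have N2_sub j : (N *m N <= N ^+ j.+2)%MS.
  elim: j => [|j IHj]; first by rewrite expr2 -mulmxE.
  by rewrite exprSr -mulmxE (submx_trans N2N3) // submxMr.
by move: (N2_sub k); rewrite -addn2 exprD Nk0 mul0r submx0.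
Qed.

Theorem mainTheorem9 (F : finFieldType) (n : nat) (u : 'M[F]_n) :
  odd #|F| -> (2 <= n)%N ->
  u \in SLn F n -> unipotent u -> (2 < lambda1 u)%N ->
  type_D (conj_class u).
Proof.
move=> oddF n_ge2 uSL u_unip lambda_gt2; set N := u - 1%:M.
have N2_nz : N *m N != 0.
  have := before_find 0 lambda_gt2.
  by rewrite nth_iota ?ltnS // add0n expr2 -mulmxE -/N => ->.
have [i bi] := row_subPn (nilpotent_gap (eqP u_unip) N2_nz).
apply: (twisted_typeD (b := row i 1%:M) (two_neq0 oddF) uSL).
by rewrite -!row_mul mul1mx.
Qed.
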